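(* Let $\mathcal{L}$ be a (one-sorted) relational language and $\mathcal{M}$ an $\mathcal{L}$-structure. If $\mathcal{M}$ has an $\equiv^{\mathcal{M}}$-equivalence class of size $\kappa$, then $\mathrm{Aut}(\mathcal{M})$ has a subgroup isomorphic to $\mathrm{Perm}(\kappa)$, the group of all permutations of $\kappa$.
   Context: Let $\Phi$ be the collection of atomic formulas of the form $R(z_1,\dots,z_k)$ with $R$ a relation symbol of $\mathcal{L}$ and each $z_j$ a variable. For $a,b\in\mathcal{M}$, $\mathcal{M}\models a\equiv b$ means: for every $\psi(x,\mathbf{y})\in\Phi$ ($x$ a single variable) and every tuple $\mathbf{c}$ in $\mathcal{M}$, $\mathcal{M}\models\psi(a,\mathbf{c})\leftrightarrow\psi(b,\mathbf{c})$; this defines an equivalence relation $\equiv^{\mathcal{M}}$. *)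

From mathcomp Require Import all_boot.
Set Implicit Arguments. Unset Strict Implicit. Unset Printing Implicit Defensive.

Record language := Language { rsym : Type; arity : rsym -> nat }.

Record structure (L : language) := Structure {
  carrier :> Type;
  interp : forall R : rsym L, ('I_(arity R) -> carrier) -> Prop }.

(* Atomic formula R(z_1,...,z_k) with variables indexed by nat;
   variable 0 plays the role of the distinguished single variable x,
   the other variables form the parameter tuple y. *)
Record atomic (L : language) := Atomic {
  at_sym : rsym L;
  at_vars : 'I_(arity at_sym) -> nat }.

Definition sat_at (L : language) (M : structure L) (psi : atomic L)
  (a : M) (c : nat -> M) : Prop :=
  @interp L M (at_sym psi)
    (fun j => if @at_vars L psi j == 0 then a else c (@at_vars L psi j)).

Definition aequiv (L : language) (M : structure L) (a b : M) : Prop :=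
  forall (psi : atomic L) (c : nat -> M), sat_at psi a c <-> sat_at psi b c.

Definition bijective_map (A B : Type) (f : A -> B) : Prop :=
  exists g : B -> A, (forall x, g (f x) = x) /\ (forall y, f (g y) = y).

Definition is_aut (L : language) (M : structure L) (f : M -> M) : Prop :=
  bijective_map f /\
  forall (R : rsym L) (t : 'I_(arity R) -> M), @interp L M R t <-> @interp L M R (f \o t).

From Stdlib Require Import Classical ClassicalEpsilon FunctionalExtensionality.
From mathcomp Require Import all_boot.
Set Implicit Arguments. Unset Strict Implicit. Unset Printing Implicit Defensive.

(** A permutation [s] of the class, extended by the identity outside it, moves
    every element to an [≡]-equivalent one.  Taking the other arguments of a
    relation as parameters, [≡] allows replacing any single argument by an
    equivalent element, hence all of them one at a time; so the extension of
    [s] preserves every relation and is an automorphism.  Extension commutes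
    with composition and is injective, giving the embedding of Perm(κ). *)

Section Equivalence.
Variables (L : language) (M : structure L).

Lemma aequiv_refl (x : M) : aequiv x x.
Proof. by []. Qed.

Lemma aequiv_sym (x y : M) : aequiv x y -> aequiv y x.
Proof. by move=> xy psi c; split=> /(xy psi c). Qed.

Lemma aequiv_trans (x y z : M) : aequiv x y -> aequiv y z -> aequiv x z.
Proof. by move=> xy yz psi c; rewrite (xy psi c) (yz psi c). Qed.

Lemma interp_update_aequiv (R : rsym L) (t : 'I_(arity R) -> M) j0 (y : M) :
  aequiv (t j0) y -> interp t <-> interp (fun j => if j == j0 then y else t j).
Proof.
move=> t_y.
(* Coordinate [j0] becomes the variable 0, every other coordinate [j] the parameter [j.+1]. *)
pose psi := Atomic (fun j : 'I_(arity R) => if j == j0 then 0 else j.+1).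
pose c k := if @insub _ (fun i => i < arity R) 'I_(arity R) k.-1 is Some j then t j else y.
have sat_psi z : sat_at psi z c <-> interp (fun j => if j == j0 then z else t j).
  suff -> : (fun j => if j == j0 then z else t j) =
    (fun j => if @at_vars _ psi j == 0 then z else c (@at_vars _ psi j)) by [].
  by apply: functional_extensionality => j /=; case: eqP => //= _; rewrite /c /= valK.
have {1}<- : (fun j => if j == j0 then t j0 else t j) = t.
  by apply: functional_extensionality => j; case: eqP => // ->.
by rewrite -!sat_psi; apply: t_y.
Qed.

Lemma interp_aequiv (R : rsym L) (t t' : 'I_(arity R) -> M) :
  (forall j, aequiv (t j) (t' j)) -> interp t <-> interp t'.
Proof.
suff agree_off (s : seq 'I_(arity R)) u : (forall j, aequiv (u j) (t' j)) ->
    (forall j, j \notin s -> u j = t' j) -> interp u <-> interp t'.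
  by move=> tt'; apply: (agree_off (enum 'I_(arity R))) => // j; rewrite mem_enum.
elim: s u => [|j0 s IH] u uu' agree.
  by have -> : u = t' by apply: functional_extensionality => j; apply: agree.
apply: iff_trans (interp_update_aequiv (uu' j0)) _.
apply: IH => j /=; case: eqP => [->|/eqP ne].
- exact: aequiv_refl.
- exact: uu'.
- by [].
- by move=> js; apply: agree; rewrite in_cons negb_or ne.
Qed.

Lemma aequiv_bijection_is_aut (f : M -> M) :
  bijective_map f -> (forall m, aequiv m (f m)) -> is_aut f.
Proof.
move=> f_bij f_aequiv; split=> // R t.
by apply: interp_aequiv => j; apply: f_aequiv.
Qed.

End Equivalence.

Section Transport.
Variables (K T : Type) (e : K -> T).
Hypothesis e_inj : injective e.

Definition transport (s : K -> K) (m : T) : T :=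
  match excluded_middle_informative (exists k, e k = m) with
  | left ex => e (s (proj1_sig (constructive_indefinite_description _ ex)))
  | right _ => m
  end.

Lemma transportE s k : transport s (e k) = e (s k).
Proof.
rewrite /transport; case: excluded_middle_informative => [ex|]; last by case; exists k.
by case: constructive_indefinite_description => k' /= /e_inj ->.
Qed.

Lemma transport_out s m : ~ (exists k, e k = m) -> transport s m = m.
Proof. by rewrite /transport; case: excluded_middle_informative. Qed.

Lemma transport_comp s t m : transport (s \o t) m = transport s (transport t m).
Proof.
have [[k <-]|out] := classic (exists k, e k = m); first by rewrite !transportE.
by rewrite !transport_out.
Qed.

Lemma transport_id m : transport id m = m.
Proof.
have [[k <-]|out] := classic (exists k, e k = m); first by rewrite transportE.
by rewrite transport_out.
Qed.

Lemma transport_bij s : bijective_map s -> bijective_map (transport s).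
Proof.
move=> [g [gs sg]]; exists (transport g); split=> m; rewrite -transport_comp.
  by rewrite (_ : g \o s = id) ?transport_id //; apply: functional_extensionality.
by rewrite (_ : s \o g = id) ?transport_id //; apply: functional_extensionality.
Qed.

Lemma transport_inj s t : (forall m, transport s m = transport t m) -> forall k, s k = t k.
Proof. by move=> st k; apply: e_inj; rewrite -!transportE. Qed.

End Transport.

Theorem corollary5p3 (L : language) (M : structure L) (K : Type) (a : M)
    (e : K -> M) :
  (forall k1 k2, e k1 = e k2 -> k1 = k2) ->
  (forall m : M, aequiv m a <-> exists k, e k = m) ->
  exists h : (K -> K) -> (M -> M),
    (forall s, bijective_map s -> is_aut (h s)) /\
    (forall s t, bijective_map s -> bijective_map t ->
       forall m, h (s \o t) m = (h s \o h t) m) /\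
    (forall s t, bijective_map s -> bijective_map t ->
       (forall m, h s m = h t m) -> forall k, s k = t k).
Proof.
move=> e_inj class_a.
have transport_aequiv s m : aequiv m (transport e s m).
  have [[k <-]|out] := classic (exists k, e k = m); last first.
    by rewrite transport_out //; apply: aequiv_refl.
  rewrite transportE //; apply: (@aequiv_trans _ _ _ a).
    by apply/class_a; exists k.
  by apply/aequiv_sym/class_a; exists (s k).
exists (transport e); split; [|split].
- move=> s s_bij; apply: aequiv_bijection_is_aut => //.
  exact: transport_bij.
- by move=> s t _ _ m; apply: transport_comp.
- by move=> s t _ _; apply: transport_inj.
Qed.
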